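(* Let $0<\omega\le\pi/2$ and let $\mathcal{O}$ be a convex polygon with exactly $3$ narrow vertices. Then for every valid $\omega$-probe $\mathcal{W}(\omega,q,H_1,H_2)$ of $\mathcal{O}$, at least one of the rays $H_1,H_2$ contains a narrow vertex of $\mathcal{O}$.
   Context: A vertex of a convex polygon $\mathcal{O}$ is a narrow vertex if the internal angle of $\mathcal{O}$ at that vertex is at most $\omega$. An $\omega$-wedge $\mathcal{W}(\omega,q,H_1,H_2)$ is the closed region formed by a point $q$ (the apex), two rays $H_1,H_2$ emanating from $q$ with angle $\omega$ between them such that $H_2$ is obtained from $H_1$ by a counterclockwise rotation by $\omega$, and all points between them. A valid $\omega$-probe of $\mathcal{O}$ is an $\omega$-wedge containing $\mathcal{O}$ such that each of $H_1$ and $H_2$ contains at least one point of $\mathcal{O}$. *)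

From Stdlib Require Import Reals.
Open Scope R_scope.

Definition pt := (R * R)%type.

(* orientation: > 0 iff c lies strictly to the left of the directed line a->b *)
Definition cross (a b c : pt) : R :=
  (fst b - fst a) * (snd c - snd a) - (snd b - snd a) * (fst c - fst a).

Definition dot (u w : pt) : R := fst u * fst w + snd u * snd w.
Definition vsub (a b : pt) : pt := (fst a - fst b, snd a - snd b).
Definition vnorm (u : pt) : R := sqrt (dot u u).

(* A convex polygon with n vertices v 0, ..., v (n-1) listed counterclockwise
   (indices modulo n): every vertex other than the endpoints of an edge lies
   strictly to the left of that edge (strict convexity = genuine vertices). *)
Definition nxt (n i : nat) : nat := (S i) mod n.
Definition prv (n i : nat) : nat := (i + n - 1) mod n.

Definition convex_polygon (n : nat) (v : nat -> pt) : Prop :=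
  (3 <= n)%nat /\
  forall i j, (i < n)%nat -> (j < n)%nat -> j <> i -> j <> nxt n i ->
    cross (v i) (v (nxt n i)) (v j) > 0.

Definition in_polygon (n : nat) (v : nat -> pt) (p : pt) : Prop :=
  forall i, (i < n)%nat -> cross (v i) (v (nxt n i)) p >= 0.

Definition internal_angle (n : nat) (v : nat -> pt) (i : nat) : R :=
  let a := vsub (v (prv n i)) (v i) in
  let b := vsub (v (nxt n i)) (v i) in
  acos (dot a b / (vnorm a * vnorm b)).

Definition narrow (omega : R) (n : nat) (v : nat -> pt) (i : nat) : Prop :=
  (i < n)%nat /\ internal_angle n v i <= omega.

Definition dir (theta : R) : pt := (cos theta, sin theta).

Definition on_ray (q : pt) (theta : R) (p : pt) : Prop :=
  exists t, 0 <= t /\ p = (fst q + t * cos theta, snd q + t * sin theta).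

(* omega-wedge W(omega, q, H1, H2): H1 = ray from q at angle theta,
   H2 = H1 rotated counterclockwise by omega (angle theta + omega);
   region = closed region between them (omega < pi, so it is the convex cone). *)
Definition in_wedge (omega : R) (q : pt) (theta : R) (p : pt) : Prop :=
  exists a b, 0 <= a /\ 0 <= b /\
    p = (fst q + a * cos theta + b * cos (theta + omega),
         snd q + a * sin theta + b * sin (theta + omega)).

Definition valid_probe (omega : R) (n : nat) (v : nat -> pt) (q : pt) (theta : R) : Prop :=
  (forall p, in_polygon n v p -> in_wedge omega q theta p) /\
  (exists p, in_polygon n v p /\ on_ray q theta p) /\
  (exists p, in_polygon n v p /\ on_ray q (theta + omega) p).

Definition exactly_three_narrow (omega : R) (n : nat) (v : nat -> pt) : Prop :=
  exists i j k, narrow omega n v i /\ narrow omega n v j /\ narrow omega n v k /\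
    i <> j /\ j <> k /\ i <> k /\
    forall l, narrow omega n v l -> l = i \/ l = j \/ l = k.

(* Rotate so that H1 points in direction 0 and H2 in direction omega.  At a vertex, the
   directions d such that the polygon lies strictly left of the line through the vertex with
   direction d form an open arc from the direction of the incoming edge to that of the
   outgoing edge; its length is the exterior angle, at least PI - omega at a narrow vertex,
   and the arcs of distinct vertices are disjoint.  If a narrow vertex lies on neither ray,
   its arc avoids direction 0 and the reverse of H2, so it sits inside (0, PI + omega).
   Three disjoint arcs of length at least PI - omega cannot fit there when omega <= PI/2. *)

From Stdlib Require Import Reals Lra Lia Psatz.
Open Scope R_scope.

Lemma nxt_cases n k : (k < n)%nat ->
  ((k + 1 < n)%nat /\ nxt n k = (k + 1)%nat) \/ ((k + 1 = n)%nat /\ nxt n k = 0%nat).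
Proof.
  intros Hk. unfold nxt.
  destruct (Nat.eq_dec (k + 1) n) as [E|E].
  - right. split; auto. replace (S k) with n by lia. apply Nat.Div0.mod_same.
  - left. split; [lia|]. rewrite Nat.mod_small; lia.
Qed.

Lemma prv_cases n k : (k < n)%nat ->
  ((k = 0)%nat /\ prv n k = (n - 1)%nat) \/ ((0 < k)%nat /\ prv n k = (k - 1)%nat).
Proof.
  intros Hk. unfold prv. destruct k as [|k].
  - left. split; auto. rewrite Nat.mod_small; lia.
  - right. split; [lia|].
    replace (S k + n - 1)%nat with (k + 1 * n)%nat by lia.
    rewrite Nat.Div0.mod_add, Nat.mod_small; lia.
Qed.

Lemma prv_lt n k : (k < n)%nat -> (prv n k < n)%nat.
Proof. intros Hk. destruct (prv_cases n k Hk) as [[_ E]|[_ E]]; rewrite E; lia. Qed.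

Lemma nxt_lt n k : (k < n)%nat -> (nxt n k < n)%nat.
Proof. intros Hk. destruct (nxt_cases n k Hk) as [[? E]|[? E]]; rewrite E; lia. Qed.

Lemma nxt_prv n k : (k < n)%nat -> nxt n (prv n k) = k.
Proof.
  intros Hk. destruct (prv_cases n k Hk) as [[K E]|[K E]]; rewrite E;
    [destruct (nxt_cases n (n - 1)) | destruct (nxt_cases n (k - 1))]; lia.
Qed.

Lemma nxt_neq n k : (3 <= n)%nat -> (k < n)%nat -> nxt n k <> k /\ nxt n k <> prv n k.
Proof.
  intros H3 Hk.
  destruct (nxt_cases n k Hk) as [[? E]|[? E]];
    destruct (prv_cases n k Hk) as [[? F]|[? F]]; rewrite E, F; lia.
Qed.

Definition det (a b : pt) : R := fst a * snd b - snd a * fst b.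

Definition in_edge (n : nat) (v : nat -> pt) (k : nat) : pt := vsub (v k) (v (prv n k)).
Definition out_edge (n : nat) (v : nat -> pt) (k : nat) : pt := vsub (v (nxt n k)) (v k).

Lemma det_zero_indep a b w : det a w = 0 -> det b w = 0 -> det a b <> 0 -> w = (0, 0).
Proof.
  destruct a as [a1 a2], b as [b1 b2], w as [w1 w2]. unfold det; simpl. intros A B C.
  assert (E1 : w1 * (a1 * b2 - a2 * b1) = 0).
  { transitivity (b1 * (a1 * w2 - a2 * w1) - a1 * (b1 * w2 - b2 * w1)); [ring|].
    rewrite A, B; ring. }
  assert (E2 : w2 * (a1 * b2 - a2 * b1) = 0).
  { transitivity (b2 * (a1 * w2 - a2 * w1) - a2 * (b1 * w2 - b2 * w1)); [ring|].
    rewrite A, B; ring. }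
  apply Rmult_integral in E1, E2. f_equal; tauto.
Qed.

Lemma vsub_zero p x : vsub p x = (0, 0) -> p = x.
Proof.
  destruct p as [p1 p2], x as [x1 x2]. unfold vsub; simpl. intros E.
  injection E. intros. f_equal; lra.
Qed.

Section ConvexPolygon.

Variables (n : nat) (v : nat -> pt).
Hypothesis Hconv : convex_polygon n v.

Lemma vertex_in_polygon k : (k < n)%nat -> in_polygon n v (v k).
Proof.
  intros Hk i Hi. destruct Hconv as [_ Hc].
  destruct (Nat.eq_dec k i) as [<-|E]; [unfold cross; lra|].
  destruct (Nat.eq_dec k (nxt n i)) as [->|F]; [unfold cross; lra|].
  apply Rgt_ge, Hc; auto.
Qed.

Lemma det_in_out_edge_pos k : (k < n)%nat -> 0 < det (in_edge n v k) (out_edge n v k).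
Proof.
  intros Hk. destruct Hconv as [H3 Hc]. destruct (nxt_neq n k H3 Hk) as [N1 N2].
  pose proof (Hc (prv n k) (nxt n k) (prv_lt n k Hk) (nxt_lt n k Hk) N2
    ltac:(rewrite nxt_prv; assumption)) as H.
  rewrite nxt_prv in H by exact Hk.
  unfold cross in H. unfold det, in_edge, out_edge, vsub; simpl. lra.
Qed.

(* Express [d] in the basis formed by the two edges at [v k]. *)
Lemma supporting_line_identity k p d : (k < n)%nat -> in_polygon n v p ->
  det (in_edge n v k) (out_edge n v k) * det d (vsub p (v k)) =
    det d (out_edge n v k) * det (in_edge n v k) (vsub p (v k))
    + det (in_edge n v k) d * det (out_edge n v k) (vsub p (v k))
  /\ 0 <= det (in_edge n v k) (vsub p (v k)) /\ 0 <= det (out_edge n v k) (vsub p (v k)).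
Proof.
  intros Hk Hp.
  pose proof (Hp (prv n k) (prv_lt n k Hk)) as P1. pose proof (Hp k Hk) as P2.
  rewrite nxt_prv in P1 by exact Hk. unfold cross in P1, P2.
  unfold det, in_edge, out_edge, vsub; simpl. split; [ring | lra].
Qed.

Lemma supporting_line k p d : (k < n)%nat -> in_polygon n v p ->
  0 <= det (in_edge n v k) d -> 0 <= det d (out_edge n v k) -> 0 <= det d (vsub p (v k)).
Proof.
  intros Hk Hp H1 H2.
  destruct (supporting_line_identity k p d Hk Hp) as [E [A B]].
  pose proof (det_in_out_edge_pos k Hk). nra.
Qed.

Lemma supporting_line_strict k p d : (k < n)%nat -> in_polygon n v p ->
  0 < det (in_edge n v k) d -> 0 < det d (out_edge n v k) ->
  0 < det d (vsub p (v k)) \/ p = v k.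
Proof.
  intros Hk Hp H1 H2.
  destruct (supporting_line_identity k p d Hk Hp) as [E [A B]].
  pose proof (det_in_out_edge_pos k Hk) as C.
  destruct (Rlt_le_dec 0 (det d (vsub p (v k)))) as [X|X]; [now left|right].
  assert (A0 : det (in_edge n v k) (vsub p (v k)) = 0) by nra.
  assert (B0 : det (out_edge n v k) (vsub p (v k)) = 0) by nra.
  apply vsub_zero, (det_zero_indep _ _ _ A0 B0). lra.
Qed.

Lemma vertex_inj k l : (k < n)%nat -> (l < n)%nat -> v k = v l -> k = l.
Proof.
  intros Hk Hl E. destruct Hconv as [H3 Hc].
  destruct (Nat.eq_dec k l) as [|Hkl]; [assumption|exfalso].
  assert (A : l = nxt n k).
  { destruct (Nat.eq_dec l (nxt n k)) as [X|X]; auto.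
    pose proof (Hc k l Hk Hl (not_eq_sym Hkl) X) as H. rewrite E in H. unfold cross in H. lra. }
  assert (B : k = nxt n l).
  { destruct (Nat.eq_dec k (nxt n l)) as [X|X]; auto.
    pose proof (Hc l k Hl Hk Hkl X) as H. rewrite E in H. unfold cross in H. lra. }
  destruct (nxt_cases n k Hk) as [[? ?]|[? ?]], (nxt_cases n l Hl) as [[? ?]|[? ?]]; lia.
Qed.

Definition supporting_dir (k : nat) (d : pt) : Prop :=
  0 < det (in_edge n v k) d /\ 0 < det d (out_edge n v k).

Lemma supporting_dir_unique k l d : (k < n)%nat -> (l < n)%nat ->
  supporting_dir k d -> supporting_dir l d -> k = l.
Proof.
  intros Hk Hl [A B] [C D].
  destruct (supporting_line_strict k (v l) d Hk (vertex_in_polygon l Hl) A B) as [X|X];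
    [|now apply vertex_inj].
  destruct (supporting_line_strict l (v k) d Hl (vertex_in_polygon k Hk) C D) as [Y|Y];
    [|now symmetry; apply vertex_inj].
  exfalso. revert X Y. unfold det, vsub; simpl. lra.
Qed.

End ConvexPolygon.

Definition smul (r : R) (u : pt) : pt := (r * fst u, r * snd u).

Lemma det_smul_l r u w : det (smul r u) w = r * det u w.
Proof. unfold det, smul; simpl; ring. Qed.

Lemma det_smul_r r u w : det u (smul r w) = r * det u w.
Proof. unfold det, smul; simpl; ring. Qed.

Lemma dot_smul r s u w : dot (smul r u) (smul s w) = r * s * dot u w.
Proof. unfold dot, smul; simpl; ring. Qed.

Lemma det_dir a b : det (dir a) (dir b) = sin (b - a).
Proof. unfold det, dir; simpl. rewrite sin_minus. ring. Qed.

Lemma dot_dir a b : dot (dir a) (dir b) = cos (b - a).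
Proof. unfold dot, dir; simpl. rewrite cos_minus. ring. Qed.

Lemma vnorm_smul_dir r t : vnorm (smul r (dir t)) = Rabs r.
Proof.
  unfold vnorm. rewrite dot_smul, dot_dir, Rminus_diag, cos_0, Rmult_1_r.
  apply sqrt_Rsqr_abs.
Qed.

Lemma det_vsub_swap u a b : det u (vsub a b) = - det u (vsub b a).
Proof. unfold det, vsub; simpl; ring. Qed.

Lemma cos_sin_sq t : cos t * cos t + sin t * sin t = 1.
Proof. pose proof (sin2_cos2 t). unfold Rsqr in H. lra. Qed.

Lemma vnorm_pos_l a b : 0 < det a b -> 0 < vnorm a.
Proof.
  destruct a as [a1 a2], b as [b1 b2]. unfold det, vnorm, dot; simpl. intros H.
  apply sqrt_lt_R0.
  destruct (Req_dec a1 0) as [->|A]; [destruct (Req_dec a2 0) as [->|B]; [lra|]|].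
  - pose proof (Rsqr_pos_lt a2 B). unfold Rsqr in *. nra.
  - pose proof (Rsqr_pos_lt a1 A). unfold Rsqr in *. nra.
Qed.

Lemma vnorm_pos_r a b : 0 < det a b -> 0 < vnorm b.
Proof.
  intros H. apply (vnorm_pos_l b (smul (-1) a)).
  rewrite det_smul_r. unfold det in *; lra.
Qed.

Lemma unit_angle c s : c * c + s * s = 1 ->
  exists t, 0 <= t < 2 * PI /\ c = cos t /\ s = sin t.
Proof.
  intros Hcs. pose proof PI_RGT_0.
  assert (Hc : -1 <= c <= 1) by (split; nra).
  assert (Hs : sqrt (1 - c²) = Rabs s).
  { replace (1 - c²) with (s²) by (unfold Rsqr; lra). apply sqrt_Rsqr_abs. }
  pose proof (acos_bound c) as Ha.
  destruct (Rle_dec 0 s) as [S|S].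
  - exists (acos c). rewrite cos_acos, sin_acos, Hs, Rabs_pos_eq by lra.
    repeat split; lra.
  - (* [acos c = 0] would force [c = 1], hence [s = 0]. *)
    assert (Ha0 : acos c <> 0).
    { intros E. assert (c = 1) by (rewrite <- (cos_acos c Hc), E; apply cos_0). nra. }
    exists (2 * PI - acos c).
    rewrite cos_minus, sin_minus, cos_2PI, sin_2PI, cos_acos, sin_acos, Hs, Rabs_left by lra.
    repeat split; [lra | lra | ring | ring].
Qed.

(* Rotate by [-th], then normalise. *)
Lemma polar_angle (w : pt) (th : R) : 0 < vnorm w ->
  exists al, 0 <= al < 2 * PI /\ w = smul (vnorm w) (dir (th + al)).
Proof.
  intros Hr. set (r := vnorm w) in *.
  assert (Hrr : r * r = dot w w) by (apply sqrt_sqrt; unfold dot; nra).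
  destruct w as [x y]. unfold dot in Hrr; simpl in Hrr.
  pose proof (cos_sin_sq th) as Hth.
  set (X := cos th * x + sin th * y). set (Y := cos th * y - sin th * x).
  assert (HXY : X * X + Y * Y = r * r).
  { rewrite Hrr. transitivity ((cos th * cos th + sin th * sin th) * (x * x + y * y));
      [unfold X, Y; ring | rewrite Hth; ring]. }
  assert (Hx : x = cos th * X - sin th * Y).
  { transitivity ((cos th * cos th + sin th * sin th) * x);
      [rewrite Hth; ring | unfold X, Y; ring]. }
  assert (Hy : y = sin th * X + cos th * Y).
  { transitivity ((cos th * cos th + sin th * sin th) * y);
      [rewrite Hth; ring | unfold X, Y; ring]. }
  destruct (unit_angle (X / r) (Y / r)) as [al [Hal [Hc Hs]]].
  { replace (X / r * (X / r) + Y / r * (Y / r)) with ((X * X + Y * Y) / (r * r)) by (field; lra).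
    rewrite HXY. field. lra. }
  exists al. split; [exact Hal|].
  unfold smul, dir; simpl. rewrite cos_plus, sin_plus, <- Hc, <- Hs, Hx, Hy.
  f_equal; field; lra.
Qed.

Lemma sin_between th om : sin om = sin (th + om) * cos th - cos (th + om) * sin th.
Proof. rewrite <- sin_minus. f_equal. ring. Qed.

Lemma wedge_on_first_ray om q th p p' : 0 < sin om ->
  in_wedge om q th p -> on_ray q th p' -> 0 <= det (dir th) (vsub p' p) -> on_ray q th p.
Proof.
  intros Hs [a [b [a0 [b0 ->]]]] [t [t0 ->]]. unfold det, dir, vsub; simpl. intros H.
  assert (b = 0) by (rewrite (sin_between th om) in Hs; nra). subst b.
  exists a. split; [exact a0|]. f_equal; ring.
Qed.

Lemma wedge_on_second_ray om q th p p' : 0 < sin om ->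
  in_wedge om q th p -> on_ray q (th + om) p' -> 0 <= det (dir (th + om)) (vsub p p') ->
  on_ray q (th + om) p.
Proof.
  intros Hs [a [b [a0 [b0 ->]]]] [t [t0 ->]]. unfold det, dir, vsub; simpl. intros H.
  assert (a = 0) by (rewrite (sin_between th om) in Hs; nra). subst a.
  exists b. split; [exact b0|]. f_equal; ring.
Qed.

Lemma sin_pos_range x : 0 <= x < 2 * PI -> 0 < sin x -> 0 < x < PI.
Proof.
  intros Hx Hs. split.
  - destruct (Req_dec x 0) as [->|N]; [rewrite sin_0 in Hs|]; lra.
  - destruct (Rlt_le_dec x PI) as [L|L]; [exact L|].
    pose proof (sin_le_0 x L ltac:(lra)). lra.
Qed.

Lemma edge_angle_cases om al be : 0 < om -> om <= PI / 2 ->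
  0 <= al < 2 * PI -> 0 <= be < 2 * PI ->
  0 < sin (be - al) -> cos (be - al) <= - cos om ->
  (sin al <= 0 /\ 0 <= sin be) \/ (0 <= sin (al - om) /\ 0 <= sin (om - be)) \/
  (0 < al /\ be < PI + om /\ PI - om <= be - al /\ be - al < PI).
Proof.
  intros H0 H1 [Ha0 Ha1] [Hb0 Hb1] Hs Hc. pose proof PI_RGT_0.
  destruct (Rlt_le_dec be al) as [L|L].
  { left.
    assert (Hs' : 0 < sin (be - al + 2 * PI)) by (rewrite sin_plus, cos_2PI, sin_2PI; lra).
    destruct (sin_pos_range (be - al + 2 * PI) ltac:(split; lra) Hs').
    split; [apply sin_le_0 | apply sin_ge_0]; lra. }
  destruct (sin_pos_range (be - al) ltac:(split; lra) Hs) as [D0 D1].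
  assert (Hd : PI - om <= be - al).
  { destruct (Rlt_le_dec (be - al) (PI - om)) as [E|E]; [exfalso|exact E].
    pose proof (cos_decreasing_1 (be - al) (PI - om)
                  ltac:(lra) ltac:(lra) ltac:(lra) ltac:(lra) E) as Hcos.
    rewrite cos_minus, cos_PI, sin_PI in Hcos. lra. }
  destruct (Req_dec al 0) as [->|A0].
  { left. rewrite sin_0. split; [lra | apply sin_ge_0; lra]. }
  destruct (Rlt_le_dec be (PI + om)) as [B|B]; [right; right; lra|].
  right; left. split; [apply sin_ge_0; lra|].
  replace (om - be) with (- (be - om)) by ring. rewrite sin_neg.
  pose proof (sin_le_0 (be - om)). lra.
Qed.

Lemma three_arcs_overlap om a1 b1 a2 b2 a3 b3 : om <= PI / 2 ->
  0 < a1 -> b1 < PI + om -> PI - om <= b1 - a1 ->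
  0 < a2 -> b2 < PI + om -> PI - om <= b2 - a2 ->
  0 < a3 -> b3 < PI + om -> PI - om <= b3 - a3 ->
  (b1 <= a2 \/ b2 <= a1) -> (b2 <= a3 \/ b3 <= a2) -> (b1 <= a3 \/ b3 <= a1) -> False.
Proof. intros until 10. intros [D12|D12] [D23|D23] [D13|D13]; lra. Qed.

Section Probe.

Variables (om : R) (n : nat) (v : nat -> pt) (q : pt) (th : R).
Hypotheses (Hom0 : 0 < om) (Hom1 : om <= PI / 2).
Hypotheses (Hconv : convex_polygon n v) (Hprobe : valid_probe om n v q th).

Definition edge_angles (k : nat) (al be : R) : Prop :=
  0 <= al < 2 * PI /\ 0 <= be < 2 * PI /\
  exists ra rb, 0 < ra /\ 0 < rb /\
    in_edge n v k = smul ra (dir (th + al)) /\ out_edge n v k = smul rb (dir (th + be)).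

Lemma edge_angles_exist k : (k < n)%nat -> exists al be, edge_angles k al be.
Proof.
  intros Hk. pose proof (det_in_out_edge_pos n v Hconv k Hk) as D.
  destruct (polar_angle (in_edge n v k) th (vnorm_pos_l _ _ D)) as [al [Hal Ea]].
  destruct (polar_angle (out_edge n v k) th (vnorm_pos_r _ _ D)) as [be [Hbe Eb]].
  exists al, be. split; [exact Hal|]. split; [exact Hbe|].
  exists (vnorm (in_edge n v k)), (vnorm (out_edge n v k)).
  split; [exact (vnorm_pos_l _ _ D)|]. split; [exact (vnorm_pos_r _ _ D)|]. split; assumption.
Qed.

Lemma edge_angles_turn k al be : (k < n)%nat -> edge_angles k al be -> 0 < sin (be - al).
Proof.
  intros Hk [_ [_ [ra [rb [Ra [Rb [Ea Eb]]]]]]].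
  pose proof (det_in_out_edge_pos n v Hconv k Hk) as D.
  rewrite Ea, Eb, det_smul_l, det_smul_r, det_dir in D.
  replace (th + be - (th + al)) with (be - al) in D by ring.
  rewrite <- Rmult_assoc in D.
  pose proof (Rmult_lt_0_compat _ _ Ra Rb) as R2.
  destruct (Rlt_le_dec 0 (sin (be - al))) as [S|S]; [exact S|nra].
Qed.

Lemma edge_angles_narrow k al be : narrow om n v k -> edge_angles k al be ->
  cos (be - al) <= - cos om.
Proof.
  intros [Hk Hn] [_ [_ [ra [rb [Ra [Rb [Ea Eb]]]]]]].
  unfold internal_angle in Hn.
  assert (Ep : vsub (v (prv n k)) (v k) = smul (- ra) (dir (th + al))).
  { transitivity (smul (-1) (in_edge n v k)); [unfold smul, in_edge, vsub; simpl; f_equal; ring|].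
    rewrite Ea. unfold smul; simpl. f_equal; ring. }
  fold (out_edge n v k) in Hn. rewrite Ep, Eb, !vnorm_smul_dir, dot_smul, dot_dir in Hn.
  rewrite Rabs_Ropp, !Rabs_pos_eq in Hn by lra.
  replace (th + be - (th + al)) with (be - al) in Hn by ring.
  replace (- ra * rb * cos (be - al) / (ra * rb)) with (- cos (be - al)) in Hn by (field; lra).
  pose proof (COS_bound (be - al)) as Hb. pose proof (acos_bound (- cos (be - al))) as Ha.
  pose proof PI_RGT_0.
  pose proof (cos_decr_1 (acos (- cos (be - al))) om
                ltac:(lra) ltac:(lra) ltac:(lra) ltac:(lra) Hn) as Hc.
  rewrite cos_acos in Hc by lra. lra.
Qed.

Lemma on_first_ray_of_angles k al be : (k < n)%nat -> edge_angles k al be ->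
  sin al <= 0 -> 0 <= sin be -> on_ray q th (v k).
Proof.
  intros Hk [_ [_ [ra [rb [Ra [Rb [Ea Eb]]]]]]] Sa Sb.
  destruct Hprobe as [Hw [[p [Pp Rp]] _]].
  apply (wedge_on_first_ray om q th (v k) p);
    [apply sin_gt_0; lra | apply Hw, vertex_in_polygon; auto | exact Rp|].
  apply (supporting_line n v Hconv k); auto.
  - rewrite Ea, det_smul_l, det_dir. replace (th - (th + al)) with (- al) by ring.
    rewrite sin_neg. nra.
  - rewrite Eb, det_smul_r, det_dir. replace (th + be - th) with be by ring. nra.
Qed.

Lemma on_second_ray_of_angles k al be : (k < n)%nat -> edge_angles k al be ->
  0 <= sin (al - om) -> 0 <= sin (om - be) -> on_ray q (th + om) (v k).
Proof.
  intros Hk [_ [_ [ra [rb [Ra [Rb [Ea Eb]]]]]]] Sa Sb.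
  destruct Hprobe as [Hw [_ [p [Pp Rp]]]].
  apply (wedge_on_second_ray om q th (v k) p);
    [apply sin_gt_0; lra | apply Hw, vertex_in_polygon; auto | exact Rp|].
  (* the polygon lies to the right of the directed line [H2] *)
  rewrite det_vsub_swap.
  replace (- det (dir (th + om)) (vsub p (v k)))
    with (det (smul (-1) (dir (th + om))) (vsub p (v k))) by (rewrite det_smul_l; ring).
  apply (supporting_line n v Hconv k); auto.
  - rewrite Ea, det_smul_l, det_smul_r, det_dir.
    replace (th + om - (th + al)) with (- (al - om)) by ring. rewrite sin_neg. nra.
  - rewrite Eb, det_smul_l, det_smul_r, det_dir.
    replace (th + be - (th + om)) with (- (om - be)) by ring. rewrite sin_neg. nra.
Qed.

Lemma narrow_vertex_on_ray_or_arc k : narrow om n v k ->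
  on_ray q th (v k) \/ on_ray q (th + om) (v k) \/
  exists al be, edge_angles k al be /\
    0 < al /\ be < PI + om /\ PI - om <= be - al /\ be - al < PI.
Proof.
  intros Hn. pose proof Hn as [Hk _].
  destruct (edge_angles_exist k Hk) as [al [be Hab]].
  pose proof Hab as [Hal [Hbe _]].
  destruct (edge_angle_cases om al be Hom0 Hom1 Hal Hbe (edge_angles_turn k al be Hk Hab)
              (edge_angles_narrow k al be Hn Hab)) as [[S1 S2]|[[S1 S2]|Arc]].
  - left. exact (on_first_ray_of_angles k al be Hk Hab S1 S2).
  - right; left. exact (on_second_ray_of_angles k al be Hk Hab S1 S2).
  - right; right. exists al, be. split; assumption.
Qed.

Lemma supporting_dir_of_angles k al be g : edge_angles k al be ->
  al < g < be -> be - al < PI -> supporting_dir n v k (dir (th + g)).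
Proof.
  intros [_ [_ [ra [rb [Ra [Rb [Ea Eb]]]]]]] [Hg1 Hg2] Hd. split.
  - rewrite Ea, det_smul_l, det_dir. replace (th + g - (th + al)) with (g - al) by ring.
    pose proof (sin_gt_0 (g - al) ltac:(lra) ltac:(lra)). nra.
  - rewrite Eb, det_smul_r, det_dir. replace (th + be - (th + g)) with (be - g) by ring.
    pose proof (sin_gt_0 (be - g) ltac:(lra) ltac:(lra)). nra.
Qed.

(* A direction in both arcs would support the polygon at two distinct vertices. *)
Lemma edge_arcs_disjoint k l al be al' be' : (k < n)%nat -> (l < n)%nat -> k <> l ->
  edge_angles k al be -> edge_angles l al' be' ->
  0 < be - al < PI -> 0 < be' - al' < PI -> be <= al' \/ be' <= al.
Proof.
  intros Hk Hl Hkl Ak Al [Dk0 Dk] [Dl0 Dl].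
  destruct (Rle_dec be al') as [E|E]; [now left|].
  destruct (Rle_dec be' al) as [F|F]; [now right|].
  exfalso. apply Hkl.
  set (g := (Rmax al al' + Rmin be be') / 2).
  assert (G : al < g < be /\ al' < g < be').
  { apply Rnot_le_lt in E, F.
    pose proof (Rmax_l al al'). pose proof (Rmax_r al al').
    pose proof (Rmin_l be be'). pose proof (Rmin_r be be').
    assert (Rmax al al' < Rmin be be') by (apply Rmax_lub_lt; apply Rmin_glb_lt; lra).
    unfold g. repeat split; lra. }
  apply (supporting_dir_unique n v Hconv k l (dir (th + g)) Hk Hl);
    [apply (supporting_dir_of_angles k al be) | apply (supporting_dir_of_angles l al' be')];
    tauto.
Qed.

End Probe.

Theorem lemma6p1 (omega : R) (n : nat) (v : nat -> pt) :
  0 < omega -> omega <= PI / 2 ->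
  convex_polygon n v ->
  exactly_three_narrow omega n v ->
  forall (q : pt) (theta : R),
    valid_probe omega n v q theta ->
    exists i, narrow omega n v i /\
      (on_ray q theta (v i) \/ on_ray q (theta + omega) (v i)).
Proof.
  intros H0 H1 Hconv [i [j [k [Ni [Nj [Nk [Hij [Hjk [Hik _]]]]]]]]] q th Hprobe.
  pose proof (narrow_vertex_on_ray_or_arc omega n v q th H0 H1 Hconv Hprobe) as Cases.
  destruct (Cases i Ni) as [R|[R|[a1 [b1 [A1 X1]]]]]; [now exists i; auto .. |].
  destruct (Cases j Nj) as [R|[R|[a2 [b2 [A2 X2]]]]]; [now exists j; auto .. |].
  destruct (Cases k Nk) as [R|[R|[a3 [b3 [A3 X3]]]]]; [now exists k; auto .. |].
  exfalso.
  destruct Ni as [Li _], Nj as [Lj _], Nk as [Lk _].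
  destruct X1 as [? [? [? ?]]], X2 as [? [? [? ?]]], X3 as [? [? [? ?]]].
  assert (0 < PI - omega) by (pose proof PI_RGT_0; lra).
  apply (three_arcs_overlap omega a1 b1 a2 b2 a3 b3 H1); auto;
    [apply (edge_arcs_disjoint n v th Hconv i j) |
     apply (edge_arcs_disjoint n v th Hconv j k) |
     apply (edge_arcs_disjoint n v th Hconv i k)]; auto; split; lra.
Qed.
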